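(* Let $\mathcal H$ be a Hilbert space and $\mathcal S,\mathcal A\subseteq\mathcal H$ closed subspaces with $\mathcal S,\mathcal A,\mathcal S^\perp,\mathcal A^\perp$ nonzero, $\mathcal A\oplus\mathcal S^\perp=\mathcal H$, and $\sin(\mathcal A^\perp,\mathcal S)>0$. Fix $\lambda\in[0,1]$, let $B:=\lambda P_{\mathcal A\mathcal S^\perp}+(1-\lambda)P_{\mathcal S}$ and $\mathcal B:=\mathcal R(B)$. Then $$\frac{1}{1+\lambda^2\frac{\sin^2(\mathcal A,\mathcal S)}{\cos^2(\mathcal A,\mathcal S)}}\le\sin^2(\mathcal B^\perp,\mathcal S)\le\frac{1}{1+\lambda^2\frac{\cos^2(\mathcal A^\perp,\mathcal S)}{\sin^2(\mathcal A^\perp,\mathcal S)}}.$$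
   Context: $P_{\mathcal V}$ is the orthogonal projection onto a closed subspace $\mathcal V$, $\mathcal V^\perp$ its orthogonal complement, $\mathcal R(\cdot)$ the range. For closed subspaces with $\mathcal V_1\oplus\mathcal V_2=\mathcal H$, $P_{\mathcal V_1\mathcal V_2}$ is the oblique projection onto $\mathcal V_1$ along $\mathcal V_2$ (identity on $\mathcal V_1$, zero on $\mathcal V_2$). Angles between nonzero closed subspaces: $\cos(\mathcal V_1,\mathcal V_2):=\inf_{0\ne x\in\mathcal V_1}\|P_{\mathcal V_2}x\|/\|x\|$, $\sin(\mathcal V_1,\mathcal V_2):=\sup_{0\ne x\in\mathcal V_1}\|P_{\mathcal V_2^\perp}x\|/\|x\|$. *)

From Stdlib Require Import Reals Lra ClassicalEpsilon.
Open Scope R_scope.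
Set Implicit Arguments.

Record RHilbert := {
  hT :> Type;
  hzero : hT;
  hadd : hT -> hT -> hT;
  hopp : hT -> hT;
  hscal : R -> hT -> hT;
  hinner : hT -> hT -> R;
  haddA : forall x y z, hadd x (hadd y z) = hadd (hadd x y) z;
  haddC : forall x y, hadd x y = hadd y x;
  hadd0 : forall x, hadd hzero x = x;
  haddN : forall x, hadd (hopp x) x = hzero;
  hscalA : forall a b x, hscal a (hscal b x) = hscal (a * b) x;
  hscal1 : forall x, hscal 1 x = x;
  hscalDr : forall a x y, hscal a (hadd x y) = hadd (hscal a x) (hscal a y);
  hscalDl : forall a b x, hscal (a + b) x = hadd (hscal a x) (hscal b x);
  hinner_sym : forall x y, hinner x y = hinner y x;
  hinnerD : forall x y z, hinner (hadd x y) z = hinner x z + hinner y z;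
  hinnerZ : forall a x y, hinner (hscal a x) y = a * hinner x y;
  hinner_pos : forall x, 0 <= hinner x x;
  hinner_def : forall x, hinner x x = 0 -> x = hzero;
  hnorm_ := fun x => sqrt (hinner x x);
  hcomplete : forall u : nat -> hT,
    (forall eps, 0 < eps -> exists N, forall m n, (N <= m)%nat -> (N <= n)%nat ->
        hnorm_ (hadd (u m) (hopp (u n))) < eps) ->
    exists l, forall eps, 0 < eps -> exists N, forall n, (N <= n)%nat ->
        hnorm_ (hadd (u n) (hopp l)) < eps
}.

Section Hilb.
Context {H : RHilbert}.

Definition hsub (x y : H) : H := hadd H x (hopp H y).
Definition hnorm (x : H) : R := sqrt (hinner H x x).

Definition converges (u : nat -> H) (l : H) : Prop :=
  forall eps, 0 < eps -> exists N, forall n, (N <= n)%nat -> hnorm (hsub (u n) l) < eps.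

Definition closed_subspace (V : H -> Prop) : Prop :=
  V (hzero H) /\
  (forall x y, V x -> V y -> V (hadd H x y)) /\
  (forall a x, V x -> V (hscal H a x)) /\
  (forall u l, (forall n, V (u n)) -> converges u l -> V l).

Definition nonzero_sub (V : H -> Prop) : Prop := exists x, V x /\ x <> hzero H.

Definition orth (V : H -> Prop) : H -> Prop :=
  fun y => forall v, V v -> hinner H y v = 0.

Definition direct_sum_whole (V1 V2 : H -> Prop) : Prop :=
  (forall x, V1 x -> V2 x -> x = hzero H) /\
  (forall x, exists a b, V1 a /\ V2 b /\ x = hadd H a b).

Definition oproj (V : H -> Prop) (x : H) : H :=
  epsilon (inhabits (hzero H)) (fun p => V p /\ orth V (hsub x p)).

Definition obproj (V1 V2 : H -> Prop) (x : H) : H :=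
  epsilon (inhabits (hzero H)) (fun p => V1 p /\ V2 (hsub x p)).

Definition range (T : H -> H) : H -> Prop := fun y => exists x, y = T x.

Definition is_glb (E : R -> Prop) (m : R) : Prop :=
  (forall x, E x -> m <= x) /\ (forall b, (forall x, E x -> b <= x) -> b <= m).

Definition Rsup (E : R -> Prop) : R := epsilon (inhabits 0) (fun m => is_lub E m).
Definition Rinf (E : R -> Prop) : R := epsilon (inhabits 0) (fun m => is_glb E m).

Definition cos_angle (V1 V2 : H -> Prop) : R :=
  Rinf (fun r => exists x, V1 x /\ x <> hzero H /\ r = hnorm (oproj V2 x) / hnorm x).

Definition sin_angle (V1 V2 : H -> Prop) : R :=
  Rsup (fun r => exists x, V1 x /\ x <> hzero H /\
                  r = hnorm (oproj (orth V2) x) / hnorm x).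

End Hilb.

From Stdlib Require Import Reals Lra Lia Psatz ClassicalEpsilon Classical.
Open Scope R_scope.

(** For [lam > 0] the map [b |-> b - (1 - lam) P_S b] carries [A^perp] onto [B^perp] and
    multiplies the [S]-component by [lam], so a vector with [sin^2 = t] is sent to one with
    [sin^2 = t / (t + lam^2 (1 - t))], an increasing function of [t]. Taking suprema,
    [sin^2(B^perp, S) = s^2 / (s^2 + lam^2 c^2)] with [s, c] the sine and cosine of
    [(A^perp, S)]: this is the upper bound, with equality. The lower bound follows from
    [cos^2(A, S) + cos^2(A^perp, S) <= 1], obtained by comparing [b] in [A^perp] with the
    vector of [A] having the same [S]-component, and from [cos(A, S) > 0]. The latter
    holds because [A (+) S^perp = H]: by the Baire category theorem [P_A] is bounded
    below on [S], so [P_A S] is closed and therefore equal to [A]. *)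

Section InnerProduct.
Context {H : RHilbert}.
Local Notation ip := (hinner H).

Lemma inner0l z : ip (hzero H) z = 0.
Proof. pose proof (hinnerD H (hzero H) (hzero H) z) as E. rewrite hadd0 in E. lra. Qed.

Lemma innerNl x z : ip (hopp H x) z = - ip x z.
Proof. pose proof (hinnerD H (hopp H x) x z) as E. rewrite haddN, inner0l in E. lra. Qed.

Lemma innerBl x y z : ip (hsub x y) z = ip x z - ip y z.
Proof. unfold hsub. rewrite hinnerD, innerNl. ring. Qed.

Lemma innerDr x y z : ip z (hadd H x y) = ip z x + ip z y.
Proof. rewrite !(hinner_sym H z). apply hinnerD. Qed.

Lemma innerZr a x z : ip z (hscal H a x) = a * ip z x.
Proof. rewrite !(hinner_sym H z). apply hinnerZ. Qed.

Lemma inner0r z : ip z (hzero H) = 0.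
Proof. rewrite hinner_sym. apply inner0l. Qed.

Lemma innerNr x z : ip z (hopp H x) = - ip z x.
Proof. rewrite !(hinner_sym H z). apply innerNl. Qed.

Lemma innerBr x y z : ip z (hsub x y) = ip z x - ip z y.
Proof. rewrite !(hinner_sym H z). apply innerBl. Qed.

Lemma inner_ext (u v : H) : (forall z, ip u z = ip v z) -> u = v.
Proof.
  intro E.
  assert (Euv : hsub u v = hzero H) by (apply hinner_def; rewrite innerBl, !E; ring).
  unfold hsub in Euv.
  transitivity (hadd H (hadd H u (hopp H v)) v).
  - rewrite <- haddA, haddN, haddC, hadd0. reflexivity.
  - rewrite Euv, hadd0. reflexivity.
Qed.

End InnerProduct.

#[global] Hint Rewrite @hinnerD @hinnerZ @inner0l @innerNl @innerBl
  @innerDr @innerZr @inner0r @innerNr @innerBr : inner.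

Ltac vec_eq := apply inner_ext; intro; autorewrite with inner; ring.

Section Norm.
Context {H : RHilbert}.
Local Notation ip := (hinner H).

Lemma hnorm_sq (x : H) : hnorm x ^ 2 = ip x x.
Proof. unfold hnorm. apply pow2_sqrt, hinner_pos. Qed.

Lemma hnorm_ge0 (x : H) : 0 <= hnorm x.
Proof. apply sqrt_pos. Qed.

Lemma hnorm0 : hnorm (hzero H) = 0.
Proof. unfold hnorm. rewrite inner0l. apply sqrt_0. Qed.

Lemma hnorm_eq0 (x : H) : hnorm x = 0 -> x = hzero H.
Proof. intro E. apply hinner_def. rewrite <- hnorm_sq, E. ring. Qed.

Lemma inner_self_gt0 (x : H) : x <> hzero H -> 0 < ip x x.
Proof.
  intro Hx. destruct (hinner_pos H x) as [Hlt | Heq]; [exact Hlt |].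
  exfalso. apply Hx, hinner_def. auto.
Qed.

Lemma hnorm_gt0 (x : H) : x <> hzero H -> 0 < hnorm x.
Proof. intro Hx. apply sqrt_lt_R0, inner_self_gt0, Hx. Qed.

Lemma hnormZ (a : R) (x : H) : hnorm (hscal H a x) = Rabs a * hnorm x.
Proof.
  unfold hnorm. rewrite hinnerZ, innerZr, <- Rmult_assoc, sqrt_mult_alt by nra.
  f_equal. apply sqrt_Rsqr_abs.
Qed.

Lemma hsubrr (x : H) : hsub x x = hzero H.
Proof. vec_eq. Qed.

Lemma hsub_eq0 (x y : H) : hsub x y = hzero H -> x = y.
Proof.
  intro E. apply inner_ext. intro z.
  assert (ip (hsub x y) z = 0) as E0 by (rewrite E; apply inner0l).
  rewrite innerBl in E0. lra.
Qed.

Lemma inner_sub_scal (y w : H) t :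
  ip (hsub y (hscal H t w)) (hsub y (hscal H t w)) = ip y y - 2 * t * ip y w + t ^ 2 * ip w w.
Proof. autorewrite with inner. rewrite (hinner_sym H w y). ring. Qed.

Lemma Cauchy_Schwarz_sq (x y : H) : ip x y ^ 2 <= ip x x * ip y y.
Proof.
  destruct (classic (y = hzero H)) as [-> | Hy].
  { rewrite inner0r, inner0l. nra. }
  pose proof (inner_self_gt0 y Hy) as Py.
  (* the minimum of t |-> |x - t y|^2, attained at t = <x,y>/<y,y> *)
  pose proof (hinner_pos H (hsub x (hscal H (ip x y / ip y y) y))) as Pmin.
  rewrite inner_sub_scal in Pmin.
  replace (ip x x - 2 * (ip x y / ip y y) * ip x y + (ip x y / ip y y) ^ 2 * ip y y)
    with ((ip x x * ip y y - ip x y ^ 2) / ip y y) in Pmin by (field; lra).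
  apply Rmult_le_compat_r with (r := ip y y) in Pmin; [| lra].
  unfold Rdiv in Pmin. rewrite Rmult_assoc, Rinv_l in Pmin; lra.
Qed.

Lemma Cauchy_Schwarz (x y : H) : Rabs (ip x y) <= hnorm x * hnorm y.
Proof.
  pose proof (Cauchy_Schwarz_sq x y) as CS.
  rewrite <- !hnorm_sq, <- Rpow_mult_distr in CS.
  assert (0 <= hnorm x * hnorm y) by (apply Rmult_le_pos; apply hnorm_ge0).
  apply Rabs_le; split; nra.
Qed.

Lemma inner_le_hnorm (x y : H) : ip x y <= hnorm x * hnorm y.
Proof. eapply Rle_trans; [apply Rle_abs | apply Cauchy_Schwarz]. Qed.

Lemma hnorm_triangle (x y : H) : hnorm (hadd H x y) <= hnorm x + hnorm y.
Proof.
  pose proof (hnorm_ge0 x). pose proof (hnorm_ge0 y). pose proof (hnorm_ge0 (hadd H x y)).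
  assert (hnorm (hadd H x y) ^ 2 <= (hnorm x + hnorm y) ^ 2); [| nra].
  replace ((hnorm x + hnorm y) ^ 2) with (hnorm x ^ 2 + hnorm y ^ 2 + 2 * (hnorm x * hnorm y))
    by ring.
  rewrite !hnorm_sq, hinnerD, !innerDr, (hinner_sym H y x).
  pose proof (inner_le_hnorm x y). lra.
Qed.

Lemma hnorm_subC (x y : H) : hnorm (hsub x y) = hnorm (hsub y x).
Proof. unfold hnorm. f_equal. autorewrite with inner. rewrite (hinner_sym H x y). ring. Qed.

Lemma hnorm_sub_triangle (x y z : H) :
  hnorm (hsub x z) <= hnorm (hsub x y) + hnorm (hsub y z).
Proof.
  replace (hsub x z) with (hadd H (hsub x y) (hsub y z)) by vec_eq.
  apply hnorm_triangle.
Qed.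

End Norm.

Lemma inv_INR_succ_gt0 (n : nat) : 0 < / (INR n + 1).
Proof. apply Rinv_0_lt_compat. pose proof (pos_INR n). lra. Qed.

Lemma inv_INR_succ_small (eps : R) :
  0 < eps -> exists N : nat, forall n, (N <= n)%nat -> / (INR n + 1) < eps.
Proof.
  intro He. destruct (INR_archimed eps 1 He) as [N HN]. exists N. intros n Hn.
  apply le_INR in Hn. pose proof (pos_INR N).
  apply Rmult_lt_reg_r with (INR n + 1); [lra |].
  rewrite Rinv_l by lra. nra.
Qed.

Lemma nat_choice {T : Type} (d : T) (P : nat -> T -> Prop) :
  (forall n, exists v, P n v) -> exists f : nat -> T, forall n, P n (f n).
Proof.
  intro Hn. exists (fun n => epsilon (inhabits d) (P n)). intro n. apply epsilon_spec, Hn.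
Qed.

Lemma glb_exists (E : R -> Prop) (m0 : R) :
  (exists x, E x) -> (forall x, E x -> m0 <= x) -> exists m, is_glb E m.
Proof.
  intros [x0 Hx0] Hlb.
  destruct (completeness (fun y => E (- y))) as [m [Hub Hleast]].
  - exists (- m0). intros y Hy. specialize (Hlb _ Hy). lra.
  - exists (- x0). rewrite Ropp_involutive. auto.
  - exists (- m). split.
    + intros x Hx. assert (- x <= m) by (apply Hub; rewrite Ropp_involutive; auto). lra.
    + intros b Hb. assert (m <= - b); [| lra].
      apply Hleast. intros y Hy. specialize (Hb _ Hy). lra.
Qed.

Lemma Rsup_eq E m : is_lub E m -> Rsup E = m.
Proof.
  intro Hm. unfold Rsup.
  destruct (epsilon_spec (inhabits 0) (fun m => is_lub E m) (ex_intro _ m Hm)) as [Hub Hleast].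
  destruct Hm as [Hub' Hleast']. apply Rle_antisym; auto.
Qed.

Lemma Rinf_eq E m : is_glb E m -> Rinf E = m.
Proof.
  intro Hm. unfold Rinf.
  destruct (epsilon_spec (inhabits 0) (fun m => is_glb E m) (ex_intro _ m Hm)) as [Hlb Hgreat].
  destruct Hm as [Hlb' Hgreat']. apply Rle_antisym; auto.
Qed.

Lemma sqrt_ge_of_sq (y z : R) : 0 <= y -> y ^ 2 <= z -> y <= sqrt z.
Proof. intros Hy Hz. rewrite <- (sqrt_pow2 y Hy). apply sqrt_le_1_alt. simpl in *. lra. Qed.

Lemma sqrt_le_of_sq (y z : R) : 0 <= y -> z <= y ^ 2 -> sqrt z <= y.
Proof. intros Hy Hz. rewrite <- (sqrt_pow2 y Hy). apply sqrt_le_1_alt. simpl in *. lra. Qed.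

Lemma le_of_sq_le (a b : R) : 0 <= b -> a ^ 2 <= b ^ 2 -> a <= b.
Proof. intros Hb Hs. destruct (Rle_or_lt a b); auto. nra. Qed.

Lemma Rdiv_le_Rdiv (a b c d : R) : 0 < b -> 0 < d -> a * d <= c * b -> a / b <= c / d.
Proof.
  intros Hb Hd E. apply Rmult_le_reg_r with (b * d); [nra |].
  replace (a / b * (b * d)) with (a * d) by (field; lra).
  replace (c / d * (b * d)) with (c * b) by (field; lra). exact E.
Qed.

(** * Limits and the projection theorem *)

Section Limits.
Context {H : RHilbert}.
Local Notation ip := (hinner H).

Lemma Cauchy_converges (u : nat -> H) :
  (forall eps, 0 < eps -> exists N, forall m n, (N <= m)%nat -> (N <= n)%nat ->
     hnorm (hsub (u m) (u n)) < eps) -> exists l, converges u l.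
Proof. exact (hcomplete H u). Qed.

Lemma converges_unique (u : nat -> H) l1 l2 :
  converges u l1 -> converges u l2 -> l1 = l2.
Proof.
  intros C1 C2. apply hsub_eq0, hnorm_eq0.
  assert (hnorm (hsub l1 l2) <= 0); [| pose proof (hnorm_ge0 (hsub l1 l2)); lra].
  apply Rle_plus_epsilon. intros eps He.
  destruct (C1 (eps / 2)) as [N1 HN1]; [lra |].
  destruct (C2 (eps / 2)) as [N2 HN2]; [lra |].
  specialize (HN1 (max N1 N2) (Nat.le_max_l _ _)).
  specialize (HN2 (max N1 N2) (Nat.le_max_r _ _)).
  pose proof (hnorm_sub_triangle l1 (u (max N1 N2)) l2) as T.
  rewrite (hnorm_subC l1 (u _)) in T. lra.
Qed.

Lemma converges_Cauchy (u : nat -> H) l : converges u l ->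
  forall eps, 0 < eps -> exists N, forall m n, (N <= m)%nat -> (N <= n)%nat ->
     hnorm (hsub (u m) (u n)) < eps.
Proof.
  intros C eps He. destruct (C (eps / 2)) as [N HN]; [lra |].
  exists N. intros m n Hm Hn. pose proof (HN m Hm). pose proof (HN n Hn).
  pose proof (hnorm_sub_triangle (u m) l (u n)) as T. rewrite (hnorm_subC l) in T. lra.
Qed.

Lemma hnorm_limit_le (u : nat -> H) l x r : converges u l ->
  (forall eps, 0 < eps -> exists N, forall n, (N <= n)%nat -> hnorm (hsub x (u n)) <= r + eps) ->
  hnorm (hsub x l) <= r.
Proof.
  intros C Hu. apply Rle_plus_epsilon. intros eps He.
  destruct (Hu (eps / 2)) as [N1 HN1]; [lra |].
  destruct (C (eps / 2)) as [N2 HN2]; [lra |].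
  specialize (HN1 (max N1 N2) (Nat.le_max_l _ _)).
  specialize (HN2 (max N1 N2) (Nat.le_max_r _ _)).
  pose proof (hnorm_sub_triangle x (u (max N1 N2)) l). lra.
Qed.

End Limits.

Section Subspace.
Context {H : RHilbert}.
Local Notation ip := (hinner H).
Variable V : H -> Prop.
Hypothesis CV : closed_subspace V.

Lemma subspace0 : V (hzero H).
Proof. apply CV. Qed.

Lemma subspaceD x y : V x -> V y -> V (hadd H x y).
Proof. apply CV. Qed.

Lemma subspaceZ a x : V x -> V (hscal H a x).
Proof. apply CV. Qed.

Lemma subspaceB x y : V x -> V y -> V (hsub x y).
Proof.
  intros Hx Hy. replace (hsub x y) with (hadd H x (hscal H (-1) y)) by vec_eq.
  apply subspaceD, subspaceZ; auto.
Qed.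

Lemma subspace_closed u l : (forall n, V (u n)) -> converges u l -> V l.
Proof. apply CV. Qed.

Lemma parallelogram_bound x d v w :
  (forall z, V z -> d <= ip (hsub x z) (hsub x z)) -> V v -> V w ->
  ip (hsub v w) (hsub v w)
    <= 2 * (ip (hsub x v) (hsub x v) - d) + 2 * (ip (hsub x w) (hsub x w) - d).
Proof.
  intros Hd Hv Hw.
  assert (Hmid := Hd (hscal H (1 / 2) (hadd H v w)) (subspaceZ _ _ (subspaceD _ _ Hv Hw))).
  autorewrite with inner in *.
  rewrite (hinner_sym H v x), (hinner_sym H w x), (hinner_sym H w v) in *. lra.
Qed.

Lemma best_approximation_orth x p : V p ->
  (forall v, V v -> ip (hsub x p) (hsub x p) <= ip (hsub x v) (hsub x v)) ->
  orth V (hsub x p).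
Proof.
  intros Hp Hmin w Hw.
  set (c := ip (hsub x p) w). set (q := ip w w).
  assert (0 <= q) by apply hinner_pos.
  set (t := c / (q + 1)).
  assert (Ht := Hmin (hadd H p (hscal H t w)) (subspaceD _ _ Hp (subspaceZ _ _ Hw))).
  replace (hsub x (hadd H p (hscal H t w))) with (hsub (hsub x p) (hscal H t w)) in Ht by vec_eq.
  rewrite inner_sub_scal in Ht. fold c q in Ht.
  (* the perturbation p + t w with t = c/(q+1) would be strictly closer unless c = 0 *)
  assert (Hneg : 0 <= - (c ^ 2 * (q + 2) / (q + 1) ^ 2)).
  { replace (- (c ^ 2 * (q + 2) / (q + 1) ^ 2)) with (t ^ 2 * q - 2 * t * c)
      by (unfold t; field; lra). lra. }
  assert (0 <= c ^ 2 * (q + 2) / (q + 1) ^ 2).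
  { apply Rmult_le_pos; [nra | apply Rlt_le, Rinv_0_lt_compat; nra]. }
  assert (c ^ 2 * (q + 2) / (q + 1) ^ 2 = 0) as E0 by lra.
  unfold Rdiv in E0. apply Rmult_integral in E0 as [E0 | E0].
  - apply Rmult_integral in E0 as [E0 | E0]; [| lra]. nra.
  - exfalso. revert E0. apply Rinv_neq_0_compat. nra.
Qed.

Lemma best_approximation_exists x :
  exists p, V p /\ forall v, V v -> ip (hsub x p) (hsub x p) <= ip (hsub x v) (hsub x v).
Proof.
  set (dist2 := fun v => ip (hsub x v) (hsub x v)).
  destruct (glb_exists (fun r => exists v, V v /\ r = dist2 v) 0) as [d [Hlb Hgreat]].
  { exists (dist2 (hzero H)), (hzero H). split; auto. apply subspace0. }
  { intros r [v [_ ->]]. apply hinner_pos. }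
  assert (Hd : forall v, V v -> d <= dist2 v) by (intros v Hv; apply Hlb; eauto).
  assert (Hmin : forall n : nat, exists v, V v /\ dist2 v <= d + / (INR n + 1)).
  { intro n. apply NNPP. intro Hn. pose proof (inv_INR_succ_gt0 n).
    assert (d + / (INR n + 1) <= d); [| lra].
    apply Hgreat. intros r [v [Hv ->]]. apply Rnot_lt_le. intro Hlt. apply Hn. eauto with real. }
  destruct (nat_choice (hzero H) _ Hmin) as [v Hv].
  destruct (Cauchy_converges v) as [p Hp].
  { intros eps He. destruct (inv_INR_succ_small (eps ^ 2 / 4)) as [N HN]; [nra |].
    exists N. intros m n Hm Hn.
    destruct (Hv m) as [Vm Dm]. destruct (Hv n) as [Vn Dn].
    pose proof (parallelogram_bound x d _ _ Hd Vm Vn) as Par.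
    pose proof (HN m Hm). pose proof (HN n Hn).
    rewrite <- (hnorm_sq (hsub (v m) (v n))) in Par. pose proof (hnorm_ge0 (hsub (v m) (v n))).
    unfold dist2 in *. nra. }
  assert (Vp : V p) by (apply (subspace_closed v); auto; apply Hv).
  exists p. split; auto. intros w Hw.
  assert (Hd0 : 0 <= d) by (apply Hgreat; intros r [z [_ ->]]; apply hinner_pos).
  assert (hnorm (hsub x p) <= sqrt d).
  { apply (hnorm_limit_le v); [exact Hp |]. intros eps He.
    destruct (inv_INR_succ_small (eps ^ 2)) as [N HN]; [nra |].
    exists N. intros n Hn. specialize (HN n Hn). destruct (Hv n) as [_ Dn].
    pose proof (sqrt_pos d). apply le_of_sq_le; [lra |].
    rewrite hnorm_sq. unfold dist2 in Dn.
    replace ((sqrt d + eps) ^ 2) with (d + 2 * sqrt d * eps + eps ^ 2)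
      by (rewrite <- (pow2_sqrt d) at 1 by lra; ring).
    nra. }
  apply Rle_trans with d; [| apply Hd, Hw].
  rewrite <- hnorm_sq, <- (pow2_sqrt d) by lra.
  apply pow_incr. split; [apply hnorm_ge0 | assumption].
Qed.

End Subspace.

Lemma oproj_exists {H : RHilbert} (V : H -> Prop) : closed_subspace V ->
  forall x, exists p, V p /\ orth V (hsub x p).
Proof.
  intros CV x. destruct (best_approximation_exists V CV x) as [p [Hp Hmin]].
  exists p. split; auto. apply best_approximation_orth; auto.
Qed.

Section Orthogonal.
Context {H : RHilbert}.
Local Notation ip := (hinner H).

Lemma closed_subspace_orth (V : H -> Prop) : closed_subspace (orth V).
Proof.
  split; [| split; [| split]].
  - intros v _. apply inner0l.
  - intros x y Hx Hy v Hv. rewrite hinnerD, Hx, Hy; auto. ring.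
  - intros a x Hx v Hv. rewrite hinnerZ, Hx; auto. ring.
  - intros u l Hu Cu v Hv.
    assert (Rabs (ip l v) <= 0).
    2:{ pose proof (Rle_abs (ip l v)). pose proof (Rle_abs (- ip l v)).
        rewrite Rabs_Ropp in *. lra. }
    apply Rle_plus_epsilon. intros eps He.
    pose proof (hnorm_ge0 v).
    destruct (Cu (eps / (hnorm v + 1))) as [N HN]; [apply Rdiv_lt_0_compat; lra |].
    specialize (HN N (le_n N)).
    replace (ip l v) with (- ip (hsub (u N) l) v) by (rewrite innerBl, (Hu N v Hv); ring).
    rewrite Rabs_Ropp. eapply Rle_trans; [apply Cauchy_Schwarz |].
    apply Rle_trans with (eps / (hnorm v + 1) * (hnorm v + 1)).
    + pose proof (hnorm_ge0 (hsub (u N) l)). nra.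
    + right. field. lra.
Qed.

Variable S : H -> Prop.
Hypothesis CS : closed_subspace S.

Lemma oproj_spec x : S (oproj S x) /\ orth S (hsub x (oproj S x)).
Proof.
  apply (epsilon_spec (inhabits (hzero H)) (fun p => S p /\ orth S (hsub x p))).
  apply oproj_exists, CS.
Qed.

Lemma oproj_mem x : S (oproj S x).
Proof. apply oproj_spec. Qed.

Lemma oproj_orth x : orth S (hsub x (oproj S x)).
Proof. apply oproj_spec. Qed.

Lemma orth_inner_eq0 t s : orth S t -> S s -> ip s t = 0.
Proof. intros Ht Hs. rewrite hinner_sym. apply Ht, Hs. Qed.

Lemma oproj_unique x p : S p -> orth S (hsub x p) -> oproj S x = p.
Proof.
  intros Hp Hxp. apply hsub_eq0, hinner_def.
  assert (Hmem : S (hsub (oproj S x) p)) by (apply subspaceB; auto; apply oproj_mem).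
  replace (hsub (oproj S x) p) with (hsub (hsub x p) (hsub x (oproj S x))) at 1 by vec_eq.
  rewrite innerBl, Hxp, oproj_orth; auto. ring.
Qed.

Lemma inner_oprojl x y : ip (oproj S x) y = ip (oproj S x) (oproj S y).
Proof.
  pose proof (orth_inner_eq0 _ _ (oproj_orth y) (oproj_mem x)) as E.
  rewrite innerBr in E. lra.
Qed.

Lemma oproj_adjoint x y : ip (oproj S x) y = ip x (oproj S y).
Proof. rewrite inner_oprojl, hinner_sym, <- inner_oprojl, hinner_sym. reflexivity. Qed.

Lemma inner_oprojr x y : ip x (oproj S y) = ip (oproj S x) (oproj S y).
Proof. rewrite <- oproj_adjoint. apply inner_oprojl. Qed.

Lemma oprojD x y : oproj S (hadd H x y) = hadd H (oproj S x) (oproj S y).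
Proof.
  apply oproj_unique; [apply subspaceD; auto; apply oproj_mem |].
  replace (hsub (hadd H x y) (hadd H (oproj S x) (oproj S y)))
    with (hadd H (hsub x (oproj S x)) (hsub y (oproj S y))) by vec_eq.
  apply (subspaceD (orth S)); [apply closed_subspace_orth | apply oproj_orth ..].
Qed.

Lemma oprojZ a x : oproj S (hscal H a x) = hscal H a (oproj S x).
Proof.
  apply oproj_unique; [apply subspaceZ; auto; apply oproj_mem |].
  replace (hsub (hscal H a x) (hscal H a (oproj S x))) with (hscal H a (hsub x (oproj S x)))
    by vec_eq.
  apply (subspaceZ (orth S)); [apply closed_subspace_orth | apply oproj_orth].
Qed.

Lemma oprojB x y : oproj S (hsub x y) = hsub (oproj S x) (oproj S y).
Proof.
  replace (hsub x y) with (hadd H x (hscal H (-1) y)) by vec_eq.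
  rewrite oprojD, oprojZ. vec_eq.
Qed.

Lemma oproj_id s : S s -> oproj S s = s.
Proof. intro Hs. apply oproj_unique; auto. rewrite hsubrr. apply closed_subspace_orth. Qed.

Lemma oproj_idem x : oproj S (oproj S x) = oproj S x.
Proof. apply oproj_id, oproj_mem. Qed.

Lemma oproj_orth_eq0 t : orth S t -> oproj S t = hzero H.
Proof.
  intro Ht. apply oproj_unique; [apply subspace0; auto |].
  replace (hsub t (hzero H)) with t by vec_eq. exact Ht.
Qed.

Lemma inner_oproj_orth x y : ip (oproj S x) (hsub y (oproj S y)) = 0.
Proof. apply orth_inner_eq0; [apply oproj_orth | apply oproj_mem]. Qed.

Lemma pythagoras_oproj x :
  ip x x = ip (oproj S x) (oproj S x) + ip (hsub x (oproj S x)) (hsub x (oproj S x)).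
Proof. autorewrite with inner. rewrite (inner_oprojl x x), (inner_oprojr x x). ring. Qed.

Lemma hnorm_oproj_le x : hnorm (oproj S x) <= hnorm x.
Proof.
  apply le_of_sq_le; [apply hnorm_ge0 |]. rewrite !hnorm_sq, (pythagoras_oproj x).
  pose proof (hinner_pos H (hsub x (oproj S x))). lra.
Qed.

End Orthogonal.

Lemma oproj_orth_compl {H : RHilbert} (S : H -> Prop) : closed_subspace S ->
  forall x, oproj (orth S) x = hsub x (oproj S x).
Proof.
  intros CS x. apply (oproj_unique (orth S) (closed_subspace_orth S)); [apply oproj_orth; auto |].
  replace (hsub x (hsub x (oproj S x))) with (oproj S x) by vec_eq.
  intros t Ht. apply (orth_inner_eq0 S); auto. apply oproj_mem; auto.
Qed.

Section Oblique.
Context {H : RHilbert}.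
Local Notation ip := (hinner H).
Variables S A : H -> Prop.
Hypothesis CS : closed_subspace S.
Hypothesis CA : closed_subspace A.
Hypothesis DS : direct_sum_whole A (orth S).

Lemma obproj_spec x : A (obproj A (orth S) x) /\ orth S (hsub x (obproj A (orth S) x)).
Proof.
  apply (epsilon_spec (inhabits (hzero H)) (fun p => A p /\ orth S (hsub x p))).
  destruct DS as [_ Dsum]. destruct (Dsum x) as [a [b [Ha [Hb ->]]]].
  exists a. split; auto. replace (hsub (hadd H a b) a) with b by vec_eq. exact Hb.
Qed.

Lemma obproj_mem x : A (obproj A (orth S) x).
Proof. apply obproj_spec. Qed.

Lemma obproj_orth x : orth S (hsub x (obproj A (orth S) x)).
Proof. apply obproj_spec. Qed.

Lemma obproj_id a : A a -> obproj A (orth S) a = a.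
Proof.
  intro Ha. symmetry. apply hsub_eq0. destruct DS as [Dint _]. apply Dint.
  - apply subspaceB; auto. apply obproj_mem.
  - apply obproj_orth.
Qed.

Lemma oproj_obproj x : oproj S (obproj A (orth S) x) = oproj S x.
Proof.
  symmetry. apply hsub_eq0.
  rewrite <- oprojB by auto. apply oproj_orth_eq0; auto. apply obproj_orth.
Qed.

End Oblique.

(** * Angles between subspaces *)

Definition sin_ratio {H : RHilbert} (S : H -> Prop) (x : H) : R :=
  hnorm (hsub x (oproj S x)) / hnorm x.

Definition cos_ratio {H : RHilbert} (S : H -> Prop) (x : H) : R :=
  hnorm (oproj S x) / hnorm x.

Section Angles.
Context {H : RHilbert}.
Local Notation ip := (hinner H).
Variable S : H -> Prop.
Hypothesis CS : closed_subspace S.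

Lemma sin_ratio_sq x : x <> hzero H ->
  sin_ratio S x ^ 2 = ip (hsub x (oproj S x)) (hsub x (oproj S x)) / ip x x.
Proof. intro Hx. pose proof (hnorm_gt0 x Hx). unfold sin_ratio. rewrite <- !hnorm_sq. field. lra. Qed.

Lemma cos_ratio_sq x : x <> hzero H -> cos_ratio S x ^ 2 = ip (oproj S x) (oproj S x) / ip x x.
Proof. intro Hx. pose proof (hnorm_gt0 x Hx). unfold cos_ratio. rewrite <- !hnorm_sq. field. lra. Qed.

Lemma hnorm_div_ge0 (y x : H) : 0 <= hnorm y / hnorm x.
Proof.
  destruct (Req_dec (hnorm x) 0) as [E | E].
  - rewrite E. unfold Rdiv. rewrite Rinv_0. lra.
  - pose proof (hnorm_ge0 x). pose proof (hnorm_ge0 y).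
    apply Rmult_le_pos; [lra | apply Rlt_le, Rinv_0_lt_compat; lra].
Qed.

Lemma sin_ratio_sq_add_cos_ratio_sq x : x <> hzero H -> sin_ratio S x ^ 2 + cos_ratio S x ^ 2 = 1.
Proof.
  intro Hx. rewrite sin_ratio_sq, cos_ratio_sq by auto. pose proof (inner_self_gt0 x Hx).
  rewrite (pythagoras_oproj S CS x). field. rewrite <- (pythagoras_oproj S CS x). lra.
Qed.

Lemma sin_ratio_le1 x : x <> hzero H -> sin_ratio S x <= 1.
Proof.
  intro Hx. pose proof (sin_ratio_sq_add_cos_ratio_sq x Hx).
  pose proof (hnorm_div_ge0 (oproj S x) x). pose proof (hnorm_div_ge0 (hsub x (oproj S x)) x).
  unfold sin_ratio, cos_ratio in *. nra.
Qed.

Lemma cos_ratio_eq x : x <> hzero H -> cos_ratio S x = sqrt (1 - sin_ratio S x ^ 2).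
Proof.
  intro Hx. rewrite <- (sin_ratio_sq_add_cos_ratio_sq x Hx).
  replace (sin_ratio S x ^ 2 + cos_ratio S x ^ 2 - sin_ratio S x ^ 2) with (cos_ratio S x ^ 2)
    by ring.
  rewrite sqrt_pow2; [reflexivity | apply hnorm_div_ge0].
Qed.

Section NonzeroSubspace.
Variable V : H -> Prop.
Hypothesis NV : nonzero_sub V.

Lemma sin_angle_eq m :
  is_lub (fun r => exists x, V x /\ x <> hzero H /\ r = sin_ratio S x) m -> sin_angle V S = m.
Proof.
  intros [Hub Hleast]. apply Rsup_eq. split.
  - intros r [x [Vx [Hx ->]]]. rewrite oproj_orth_compl by auto. apply Hub. eauto.
  - intros b Hb. apply Hleast. intros r [x [Vx [Hx ->]]].
    apply Hb. exists x. rewrite oproj_orth_compl by auto. auto.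
Qed.

Lemma sin_angle_lub :
  is_lub (fun r => exists x, V x /\ x <> hzero H /\ r = sin_ratio S x) (sin_angle V S).
Proof.
  destruct (completeness (fun r => exists x, V x /\ x <> hzero H /\ r = sin_ratio S x))
    as [m Hm].
  - exists 1. intros r [x [_ [Hx ->]]]. apply sin_ratio_le1, Hx.
  - destruct NV as [x [Vx Hx]]. exists (sin_ratio S x). eauto.
  - rewrite (sin_angle_eq m Hm). exact Hm.
Qed.

Lemma sin_ratio_le_sin_angle x : V x -> x <> hzero H -> sin_ratio S x <= sin_angle V S.
Proof. intros Vx Hx. apply sin_angle_lub. eauto. Qed.

Lemma sin_angle_le M : (forall x, V x -> x <> hzero H -> sin_ratio S x <= M) -> sin_angle V S <= M.
Proof. intro HM. apply sin_angle_lub. intros r [x [Vx [Hx ->]]]. auto. Qed.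

Lemma sin_angle_bounds : 0 <= sin_angle V S <= 1.
Proof.
  destruct NV as [x [Vx Hx]]. split.
  - eapply Rle_trans; [apply hnorm_div_ge0 | apply (sin_ratio_le_sin_angle x Vx Hx)].
  - apply sin_angle_le. intros. apply sin_ratio_le1; auto.
Qed.

Lemma cos_angle_glb :
  is_glb (fun r => exists x, V x /\ x <> hzero H /\ r = cos_ratio S x)
         (sqrt (1 - sin_angle V S ^ 2)).
Proof.
  pose proof sin_angle_bounds as [s0 s1]. split.
  - intros r [x [Vx [Hx ->]]]. rewrite cos_ratio_eq by auto.
    apply sqrt_le_1_alt. pose proof (hnorm_div_ge0 (hsub x (oproj S x)) x).
    pose proof (sin_ratio_le_sin_angle x Vx Hx). unfold sin_ratio in *. nra.
  - intros b Hb. destruct (Rle_or_lt b 0) as [Hb0 | Hb0].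
    { pose proof (sqrt_pos (1 - sin_angle V S ^ 2)). lra. }
    assert (Hb1 : b <= 1).
    { destruct NV as [x [Vx Hx]]. eapply Rle_trans; [apply Hb; eauto |].
      rewrite cos_ratio_eq by auto. apply sqrt_le_of_sq; [lra |].
      pose proof (pow2_ge_0 (sin_ratio S x)). lra. }
    assert (Hs : sin_angle V S <= sqrt (1 - b ^ 2)).
    { apply sin_angle_le. intros x Vx Hx.
      assert (b <= cos_ratio S x) by (apply Hb; eauto).
      apply sqrt_ge_of_sq; [apply hnorm_div_ge0 |].
      pose proof (sin_ratio_sq_add_cos_ratio_sq x Hx). nra. }
    apply sqrt_ge_of_sq; [lra |].
    assert (sin_angle V S ^ 2 <= 1 - b ^ 2); [| lra].
    rewrite <- (pow2_sqrt (1 - b ^ 2)) by nra. apply pow_incr. lra.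
Qed.

Lemma cos_angle_eq : cos_angle V S = sqrt (1 - sin_angle V S ^ 2).
Proof.
  apply Rinf_eq. destruct cos_angle_glb as [Hlb Hgreat]. split.
  - intros r [x [Vx [Hx ->]]]. apply Hlb. eauto.
  - intros b Hb. apply Hgreat. intros r [x [Vx [Hx ->]]]. apply Hb. eauto.
Qed.

Lemma sin_angle_sq_add_cos_angle_sq : sin_angle V S ^ 2 + cos_angle V S ^ 2 = 1.
Proof. rewrite cos_angle_eq. pose proof sin_angle_bounds. rewrite pow2_sqrt by nra. ring. Qed.

Lemma cos_angle_bounds : 0 <= cos_angle V S <= 1.
Proof.
  pose proof sin_angle_bounds. rewrite cos_angle_eq. split; [apply sqrt_pos |].
  apply sqrt_le_of_sq; nra.
Qed.

Lemma cos_angle_le_cos_ratio x : V x -> x <> hzero H -> cos_angle V S <= cos_ratio S x.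
Proof. intros Vx Hx. rewrite cos_angle_eq. apply cos_angle_glb. eauto. Qed.

Lemma le_cos_angle m : (forall x, V x -> x <> hzero H -> m <= cos_ratio S x) -> m <= cos_angle V S.
Proof. intro Hm. rewrite cos_angle_eq. apply cos_angle_glb. intros r [x [Vx [Hx ->]]]. auto. Qed.

End NonzeroSubspace.

Lemma sin_angle_orth_self : nonzero_sub (orth S) -> sin_angle (orth S) S = 1.
Proof.
  intro NoS. apply sin_angle_eq. split.
  - intros r [t [Ht [Nt ->]]]. apply sin_ratio_le1, Nt.
  - intros M HM. destruct NoS as [t [Ht Nt]]. eapply Rle_trans; [| apply HM; eauto].
    unfold sin_ratio. rewrite oproj_orth_eq0 by auto.
    replace (hsub t (hzero H)) with t by vec_eq.
    pose proof (hnorm_gt0 t Nt). right. field. lra.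
Qed.

End Angles.

(** * The Baire category theorem *)

Section Baire.
Context {H : RHilbert}.
Variable K : nat -> H -> Prop.
Hypothesis K_closed : forall n z, ~ K n z ->
  exists eps, 0 < eps /\ forall y, hnorm (hsub y z) < eps -> ~ K n y.
Hypothesis K_no_ball : forall n x0 r, 0 < r -> exists y, hnorm (hsub y x0) < r /\ ~ K n y.

(* q = (center, radius) is a closed ball inside the open ball p that misses K k *)
Definition nested_step (k : nat) (p q : H * R) : Prop :=
  0 < snd q /\ snd q <= / (INR k + 2) /\
  forall y, hnorm (hsub y (fst q)) <= snd q -> hnorm (hsub y (fst p)) < snd p /\ ~ K k y.

Lemma nested_step_exists k p : 0 < snd p -> exists q, nested_step k p q.
Proof.
  destruct p as [x r]. simpl. intro Hr.
  destruct (K_no_ball k x (r / 2)) as [z [Hz Kz]]; [lra |].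
  destruct (K_closed k z Kz) as [eps [He Hy]].
  assert (0 < / (INR k + 2)) by (apply Rinv_0_lt_compat; pose proof (pos_INR k); lra).
  set (m := Rmin eps (Rmin (r / 2) (/ (INR k + 2)))).
  assert (m <= eps /\ m <= r / 2 /\ m <= / (INR k + 2)) as [m1 [m2 m3]].
  { unfold m. pose proof (Rmin_l eps (Rmin (r / 2) (/ (INR k + 2)))).
    pose proof (Rmin_r eps (Rmin (r / 2) (/ (INR k + 2)))).
    pose proof (Rmin_l (r / 2) (/ (INR k + 2))). pose proof (Rmin_r (r / 2) (/ (INR k + 2))).
    lra. }
  assert (0 < m) by (unfold m; repeat apply Rmin_pos; lra).
  exists (z, m / 2). unfold nested_step; simpl.
  split; [lra |]. split; [lra |].
  intros y Hyz. split.
  - pose proof (hnorm_sub_triangle y z x). lra.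
  - apply Hy. lra.
Qed.

Fixpoint nested_balls (n : nat) : H * R :=
  match n with
  | O => (hzero H, 1)
  | Datatypes.S m => epsilon (inhabits (hzero H, 1)) (nested_step m (nested_balls m))
  end.

Lemma nested_balls_step n : 0 < snd (nested_balls n) /\
  nested_step n (nested_balls n) (nested_balls (Datatypes.S n)).
Proof.
  induction n as [| n [IHpos IHstep]].
  - split; [simpl; lra |]. cbn [nested_balls].
    apply epsilon_spec, nested_step_exists. simpl. lra.
  - split; [apply IHstep |]. cbn [nested_balls] in *.
    apply epsilon_spec, nested_step_exists, IHstep.
Qed.

Lemma nested_balls_nested m j : (m <= j)%nat ->
  hnorm (hsub (fst (nested_balls j)) (fst (nested_balls m))) <= snd (nested_balls m).
Proof.
  intro Hmj. replace j with (m + (j - m))%nat by lia.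
  assert (Hin : forall d y, hnorm (hsub y (fst (nested_balls (m + d)))) <= snd (nested_balls (m + d)) ->
              hnorm (hsub y (fst (nested_balls m))) <= snd (nested_balls m)).
  { induction d as [| d IH]; intros y Hy.
    - rewrite Nat.add_0_r in Hy. exact Hy.
    - apply IH. rewrite Nat.add_succ_r in Hy.
      destruct (nested_balls_step (m + d)) as [_ [_ [_ Hs]]]. apply Rlt_le, (Hs y Hy). }
  apply (Hin (j - m)%nat). rewrite hsubrr, hnorm0. apply Rlt_le, nested_balls_step.
Qed.

Lemma nested_balls_avoid : exists l, forall k, ~ K k l.
Proof.
  set (c := fun n => fst (nested_balls n)).
  destruct (Cauchy_converges c) as [l Hl].
  { intros eps He. destruct (inv_INR_succ_small (eps / 2)) as [N HN]; [lra |].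
    exists (Datatypes.S N). intros m n Hm Hn.
    pose proof (nested_balls_nested _ m Hm). pose proof (nested_balls_nested _ n Hn).
    destruct (nested_balls_step N) as [_ [_ [Hsmall _]]].
    specialize (HN (Datatypes.S N) (Nat.le_succ_diag_r N)).
    rewrite S_INR, Rplus_assoc in HN. replace (1 + 1) with 2 in HN by ring.
    pose proof (hnorm_sub_triangle (c m) (fst (nested_balls (Datatypes.S N))) (c n)) as T.
    rewrite (hnorm_subC (fst (nested_balls (Datatypes.S N)))) in T.
    unfold c in *. lra. }
  exists l. intro k.
  destruct (nested_balls_step k) as [_ [_ [_ Hs]]]. apply (Hs l).
  rewrite hnorm_subC. apply (hnorm_limit_le c); [exact Hl |].
  intros eps He. exists (Datatypes.S k). intros n Hn.
  pose proof (nested_balls_nested _ n Hn). rewrite hnorm_subC. unfold c. lra.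
Qed.

End Baire.

Theorem Baire_category {H : RHilbert} (K : nat -> H -> Prop) :
  (forall n z, ~ K n z -> exists eps, 0 < eps /\ forall y, hnorm (hsub y z) < eps -> ~ K n y) ->
  (forall x, exists n, K n x) ->
  exists n x0 r, 0 < r /\ forall y, hnorm (hsub y x0) < r -> K n y.
Proof.
  intros K_closed K_cover. apply NNPP. intro Hno_ball.
  destruct (nested_balls_avoid K K_closed) as [l Hl].
  - intros n x0 r Hr. apply NNPP. intro Hall. apply Hno_ball. exists n, x0, r. split; auto.
    intros y Hy. apply NNPP. intro Ky. apply Hall. eauto.
  - destruct (K_cover l) as [k Kl]. exact (Hl k Kl).
Qed.

(** * [A (+) S^perp = H] forces [cos(A, S) > 0] *)

Section ClosedRange.
Context {H : RHilbert}.
Local Notation ip := (hinner H).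
Variables S A : H -> Prop.
Hypothesis CS : closed_subspace S.
Hypothesis CA : closed_subspace A.
Hypothesis DS : direct_sum_whole A (orth S).

Definition inner_dominated (n : nat) (x : H) : Prop :=
  forall w, S w -> Rabs (ip x w) <= INR n * hnorm (oproj A w).

Lemma inner_dominated_closed n z : ~ inner_dominated n z ->
  exists eps, 0 < eps /\ forall y, hnorm (hsub y z) < eps -> ~ inner_dominated n y.
Proof.
  intro Hz. apply not_all_ex_not in Hz as [w Hw]. apply imply_to_and in Hw as [Sw Hw].
  apply Rnot_le_lt in Hw. pose proof (hnorm_ge0 w).
  set (g := Rabs (ip z w) - INR n * hnorm (oproj A w)).
  assert (0 < g) by (unfold g; lra).
  exists (g / (hnorm w + 1)). split; [apply Rdiv_lt_0_compat; lra |].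
  intros y Hy Ky. specialize (Ky w Sw).
  pose proof (Cauchy_Schwarz (hsub y z) w) as C. rewrite innerBl in C.
  assert (hnorm (hsub y z) * hnorm w < g).
  { apply Rle_lt_trans with (g / (hnorm w + 1) * hnorm w); [apply Rmult_le_compat_r; lra |].
    apply Rlt_le_trans with (g / (hnorm w + 1) * (hnorm w + 1)).
    - apply Rmult_lt_compat_l; [apply Rdiv_lt_0_compat |]; lra.
    - right. field. lra. }
  pose proof (Rabs_triang_inv (ip z w) (ip y w)).
  rewrite Rabs_minus_sym in C. unfold g in *. lra.
Qed.

(* [<x, w> = <P x, P_A w>] with [P] the oblique projection onto [A] along [S^perp] *)
Lemma inner_dominated_cover x : exists n, inner_dominated n x.
Proof.
  set (p := obproj A (orth S) x).
  destruct (INR_archimed 1 (hnorm p) Rlt_0_1) as [n Hn]. exists n. intros w Sw.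
  assert (E : ip x w = ip p (oproj A w)).
  { pose proof (obproj_orth S A DS x w Sw) as Ep. rewrite innerBl in Ep.
    rewrite <- (oproj_adjoint A CA), (oproj_id A CA p) by apply (obproj_mem S A DS).
    unfold p. lra. }
  rewrite E. eapply Rle_trans; [apply Cauchy_Schwarz |].
  apply Rmult_le_compat_r; [apply hnorm_ge0 | lra].
Qed.

Lemma inner_dominated_ball n x0 r : 0 < r ->
  (forall y, hnorm (hsub y x0) < r -> inner_dominated n y) ->
  forall w, S w -> r * hnorm w <= 4 * INR n * hnorm (oproj A w).
Proof.
  intros Hr Hball w Sw. destruct (classic (w = hzero H)) as [-> | Nw].
  { rewrite hnorm0. pose proof (hnorm_ge0 (oproj A (hzero H))). pose proof (pos_INR n). nra. }
  pose proof (hnorm_gt0 w Nw) as Pw.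
  set (y := hadd H x0 (hscal H (r / 2 / hnorm w) w)).
  assert (Ky : inner_dominated n y).
  { apply Hball. replace (hsub y x0) with (hscal H (r / 2 / hnorm w) w) by (unfold y; vec_eq).
    rewrite hnormZ, Rabs_right; [field_simplify; lra |].
    apply Rle_ge, Rlt_le, Rdiv_lt_0_compat; lra. }
  assert (K0 : inner_dominated n x0) by (apply Hball; rewrite hsubrr, hnorm0; lra).
  specialize (Ky w Sw). specialize (K0 w Sw).
  assert (E : ip y w = ip x0 w + r / 2 * hnorm w).
  { unfold y. autorewrite with inner. rewrite <- hnorm_sq. field. lra. }
  rewrite E in Ky.
  pose proof (Rle_abs (ip x0 w + r / 2 * hnorm w)).
  pose proof (Rle_abs (- ip x0 w)). rewrite Rabs_Ropp in *. lra.
Qed.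

Lemma oproj_bounded_below : exists d, 0 < d /\ forall w, S w -> d * hnorm w <= hnorm (oproj A w).
Proof.
  destruct (Baire_category inner_dominated inner_dominated_closed inner_dominated_cover)
    as [n [x0 [r [Hr Hball]]]].
  pose proof (pos_INR n).
  exists (r / (4 * (INR n + 1))). split; [apply Rdiv_lt_0_compat; lra |].
  intros w Sw. pose proof (inner_dominated_ball n x0 r Hr Hball w Sw).
  pose proof (hnorm_ge0 w). pose proof (hnorm_ge0 (oproj A w)).
  apply Rmult_le_reg_r with (4 * (INR n + 1)); [lra |].
  replace (r / (4 * (INR n + 1)) * hnorm w * (4 * (INR n + 1))) with (r * hnorm w)
    by (field; lra).
  nra.
Qed.

Lemma oproj_image_closed d : 0 < d -> (forall w, S w -> d * hnorm w <= hnorm (oproj A w)) ->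
  closed_subspace (fun a => exists w, S w /\ a = oproj A w).
Proof.
  intros Hd Hb. split; [| split; [| split]].
  - exists (hzero H). split; [apply subspace0; auto |].
    symmetry. apply (oproj_orth_eq0 A CA). apply closed_subspace_orth.
  - intros x y [w1 [S1 ->]] [w2 [S2 ->]]. exists (hadd H w1 w2).
    split; [apply subspaceD; auto | symmetry; apply (oprojD A CA)].
  - intros c x [w [Sw ->]]. exists (hscal H c w).
    split; [apply subspaceZ; auto | symmetry; apply (oprojZ A CA)].
  - intros u l Hu Cu.
    destruct (nat_choice (hzero H) (fun n w => S w /\ u n = oproj A w) Hu) as [w Hw].
    (* [w] is Cauchy because [P_A] is bounded below on [S] *)
    destruct (Cauchy_converges w) as [ws Cw].
    { intros eps He. destruct (converges_Cauchy u l Cu (d * eps)) as [N HN]; [nra |].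
      exists N. intros m n Hm Hn. specialize (HN m n Hm Hn).
      destruct (Hw m) as [Sm Em]. destruct (Hw n) as [Sn En].
      rewrite Em, En, <- (oprojB A CA) in HN.
      assert (Hmn := Hb _ (subspaceB S CS _ _ Sm Sn)).
      nra. }
    exists ws. split; [apply (subspace_closed S CS w); auto; apply Hw |].
    apply (converges_unique u); auto.
    intros eps He. destruct (Cw eps He) as [N HN]. exists N. intros n Hn.
    destruct (Hw n) as [_ ->]. rewrite <- (oprojB A CA).
    eapply Rle_lt_trans; [apply (hnorm_oproj_le A CA) | auto].
Qed.

Lemma oproj_image_full d : 0 < d -> (forall w, S w -> d * hnorm w <= hnorm (oproj A w)) ->
  forall a, A a -> exists w, S w /\ a = oproj A w.
Proof.
  intros Hd Hb a Ha.
  set (R := fun a => exists w, S w /\ a = oproj A w).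
  pose proof (oproj_image_closed d Hd Hb) as CR. fold R in CR.
  (* [a - P_R a] lies in [A] and is orthogonal to [R = P_A S], hence to [S] *)
  assert (Hzero : hsub a (oproj R a) = hzero H).
  { destruct DS as [Dint _]. apply Dint.
    - apply subspaceB; auto. destruct (oproj_mem R CR a) as [w [_ ->]]. apply oproj_mem; auto.
    - intros w Sw. rewrite <- (oproj_id A CA (hsub a (oproj R a))).
      + rewrite (oproj_adjoint A CA). apply (oproj_orth R CR a). exists w. auto.
      + apply subspaceB; auto. destruct (oproj_mem R CR a) as [w' [_ ->]].
        apply oproj_mem; auto. }
  apply hsub_eq0 in Hzero. rewrite Hzero. apply oproj_mem, CR.
Qed.

Lemma cos_angle_gt0 : nonzero_sub A -> 0 < cos_angle A S.
Proof.
  intro NA. destruct oproj_bounded_below as [d [Hd Hb]].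
  apply Rlt_le_trans with d; [exact Hd |]. apply (le_cos_angle S CS A NA). intros a Ha Na.
  destruct (oproj_image_full d Hd Hb a Ha) as [w [Sw Ea]].
  assert (E : hinner H a a = hinner H (oproj S a) w).
  { rewrite Ea at 2. rewrite <- (oproj_adjoint A CA), (oproj_id A CA a Ha).
    rewrite (oproj_adjoint S CS), (oproj_id S CS w Sw). reflexivity. }
  pose proof (inner_le_hnorm (oproj S a) w) as CSa. rewrite <- E, <- hnorm_sq in CSa.
  specialize (Hb w Sw). rewrite <- Ea in Hb.
  pose proof (hnorm_gt0 a Na). pose proof (hnorm_ge0 w). pose proof (hnorm_ge0 (oproj S a)).
  unfold cos_ratio. apply Rmult_le_reg_r with (hnorm a); [lra |].
  unfold Rdiv. rewrite Rmult_assoc, Rinv_l, Rmult_1_r by lra. nra.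
Qed.

End ClosedRange.

(** * How [sin^2] transforms under rescaling of the [S]-component *)

Definition ratio_map (c t : R) : R := t / (t + c * (1 - t)).

Lemma ratio_map_denom_pos c t : 0 < c -> 0 <= t <= 1 -> 0 < t + c * (1 - t).
Proof. intros Hc Ht. destruct (Req_dec t 0) as [-> | Nt]; nra. Qed.

Lemma ratio_map_bounds c t : 0 < c -> 0 <= t <= 1 -> 0 <= ratio_map c t <= 1.
Proof.
  intros Hc Ht. pose proof (ratio_map_denom_pos c t Hc Ht). unfold ratio_map. split.
  - apply Rmult_le_pos; [lra | apply Rlt_le, Rinv_0_lt_compat; lra].
  - apply Rmult_le_reg_r with (t + c * (1 - t)); [lra |].
    unfold Rdiv. rewrite Rmult_assoc, Rinv_l by lra. nra.
Qed.

Lemma ratio_map_le c t u : 0 < c -> 0 <= t -> t <= u -> u <= 1 -> ratio_map c t <= ratio_map c u.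
Proof.
  intros Hc Ht Htu Hu. pose proof (ratio_map_denom_pos c t Hc (conj Ht (Rle_trans _ _ _ Htu Hu))).
  pose proof (ratio_map_denom_pos c u Hc (conj (Rle_trans _ _ _ Ht Htu) Hu)).
  apply Rdiv_le_Rdiv; nra.
Qed.

Lemma ratio_map_inv c t : 0 < c -> 0 <= t <= 1 -> ratio_map (/ c) (ratio_map c t) = t.
Proof.
  intros Hc Ht. pose proof (ratio_map_denom_pos c t Hc Ht). unfold ratio_map. field. nra.
Qed.

(* [U] and [V] are the squared norms of the [S^perp]- and [S]-components *)
Lemma ratio_map_components c U V : 0 < c -> 0 <= U -> 0 <= V -> 0 < U + V ->
  U / (U + c * V) = ratio_map c (U / (U + V)).
Proof. intros Hc HU HV HUV. unfold ratio_map. field. nra. Qed.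

Section Transport.
Context {H : RHilbert}.
Variable S : H -> Prop.
Hypothesis CS : closed_subspace S.

Lemma sin_angle_sq_le_ratio_map (V W : H -> Prop) c : 0 < c ->
  nonzero_sub V -> nonzero_sub W ->
  (forall x, V x -> x <> hzero H -> exists y, W y /\ y <> hzero H /\
     sin_ratio S x ^ 2 = ratio_map c (sin_ratio S y ^ 2)) ->
  sin_angle V S ^ 2 <= ratio_map c (sin_angle W S ^ 2).
Proof.
  intros Hc NV NW Hxy.
  pose proof (sin_angle_bounds S CS W NW) as [w0 w1].
  assert (Hw : 0 <= sin_angle W S ^ 2 <= 1) by nra.
  pose proof (ratio_map_bounds c _ Hc Hw) as [f0 f1].
  assert (sin_angle V S <= sqrt (ratio_map c (sin_angle W S ^ 2))).
  { apply (sin_angle_le S CS V NV). intros x Vx Nx.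
    destruct (Hxy x Vx Nx) as [y [Wy [Ny Exy]]].
    apply sqrt_ge_of_sq; [apply hnorm_div_ge0 |]. rewrite Exy.
    pose proof (hnorm_div_ge0 (hsub y (oproj S y)) y).
    pose proof (sin_ratio_le1 S CS y Ny).
    pose proof (sin_ratio_le_sin_angle S CS W NW y Wy Ny).
    unfold sin_ratio in *. apply ratio_map_le; nra. }
  rewrite <- (pow2_sqrt (ratio_map c _)) by lra.
  apply pow_incr. split; [apply (sin_angle_bounds S CS V NV) | assumption].
Qed.

Lemma sin_angle_ext (V W : H -> Prop) : nonzero_sub V -> (forall x, V x <-> W x) ->
  sin_angle W S = sin_angle V S.
Proof.
  intros NV E. apply (sin_angle_eq S CS). destruct (sin_angle_lub S CS V NV) as [Hub Hleast].
  split.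
  - intros r [x [Wx [Nx ->]]]. apply Hub. exists x. rewrite E. auto.
  - intros b Hb. apply Hleast. intros r [x [Vx [Nx ->]]]. apply Hb. exists x. rewrite <- E. auto.
Qed.

End Transport.

(** * The angle inequality [cos^2(A, S) + cos^2(A^perp, S) <= 1] *)

Section AngleSum.
Context {H : RHilbert}.
Local Notation ip := (hinner H).
Variable S : H -> Prop.
Hypothesis CS : closed_subspace S.

Lemma cos_ratio_sq_le_sin_ratio_sq a b : a <> hzero H -> b <> hzero H ->
  ip a b = 0 -> oproj S a = oproj S b -> cos_ratio S a ^ 2 <= sin_ratio S b ^ 2.
Proof.
  intros Na Nb Eab Eproj.
  set (x := oproj S b). set (t := hsub a x). set (w := hsub b x).
  assert (Ea : a = hadd H x t) by (unfold t; vec_eq).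
  assert (Eb : b = hadd H x w) by (unfold w; vec_eq).
  assert (xt : ip x t = 0) by (unfold t, x; rewrite <- Eproj; apply (inner_oproj_orth S CS)).
  assert (xw : ip x w = 0) by apply (inner_oproj_orth S CS).
  (* [a] and [b] share their [S]-component [x], so [<a, b> = 0] forces [<t, w> = -|x|^2] *)
  assert (tw : ip t w = - ip x x).
  { rewrite Ea, Eb in Eab. autorewrite with inner in Eab.
    rewrite (hinner_sym H t x), xt, xw in Eab. lra. }
  assert (aa : ip a a = ip x x + ip t t).
  { rewrite Ea. autorewrite with inner. rewrite (hinner_sym H t x), xt. ring. }
  assert (bb : ip b b = ip x x + ip w w).
  { rewrite Eb. autorewrite with inner. rewrite (hinner_sym H w x), xw. ring. }
  pose proof (Cauchy_Schwarz_sq t w) as CSq. rewrite tw in CSq.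
  pose proof (hinner_pos H x). pose proof (hinner_pos H t). pose proof (hinner_pos H w).
  pose proof (inner_self_gt0 a Na). pose proof (inner_self_gt0 b Nb).
  rewrite cos_ratio_sq, sin_ratio_sq by auto. rewrite Eproj. fold x w.
  apply Rdiv_le_Rdiv; [lra | lra |]. rewrite aa, bb. nra.
Qed.

Variable A : H -> Prop.
Hypothesis DS : direct_sum_whole A (orth S).

Lemma cos_angle_sq_add_le : nonzero_sub A -> nonzero_sub (orth A) ->
  cos_angle A S ^ 2 + cos_angle (orth A) S ^ 2 <= 1.
Proof.
  intros NA NoA. pose proof NoA as [b [Ob Nb]].
  pose proof (cos_angle_bounds S CS A NA) as [cA0 cA1].
  pose proof (cos_angle_bounds S CS (orth A) NoA) as [k0 k1].
  assert (Hk : cos_angle (orth A) S ^ 2 <= cos_ratio S b ^ 2).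
  { apply pow_incr. split; [lra | apply (cos_angle_le_cos_ratio S CS); auto]. }
  pose proof (sin_ratio_sq_add_cos_ratio_sq S CS b Nb).
  destruct (classic (oproj S b = hzero H)) as [Ex | Nx].
  { unfold cos_ratio in Hk. rewrite Ex, hnorm0 in Hk. unfold Rdiv in Hk.
    rewrite Rmult_0_l in Hk. nra. }
  set (a := obproj A (orth S) (oproj S b)).
  assert (Qa : oproj S a = oproj S b).
  { unfold a. rewrite (oproj_obproj S A CS DS), (oproj_idem S CS). reflexivity. }
  assert (Na : a <> hzero H).
  { intro Ea. apply Nx. rewrite <- Qa, Ea. apply (oproj_orth_eq0 S CS). apply closed_subspace_orth. }
  assert (Ha : cos_angle A S ^ 2 <= cos_ratio S a ^ 2).
  { apply pow_incr. split; [lra | apply (cos_angle_le_cos_ratio S CS); auto].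
    apply (obproj_mem S A DS). }
  assert (Hab : ip a b = 0).
  { rewrite hinner_sym. apply Ob, (obproj_mem S A DS). }
  pose proof (cos_ratio_sq_le_sin_ratio_sq a b Na Nb Hab Qa). lra.
Qed.

End AngleSum.

(** * The range of [lam P_{A S^perp} + (1 - lam) P_S] *)

Definition mixed_proj {H : RHilbert} (S A : H -> Prop) (lam : R) (x : H) : H :=
  hadd H (hscal H lam (obproj A (orth S) x)) (hscal H (1 - lam) (oproj S x)).

Section MixedProjection.
Context {H : RHilbert}.
Local Notation ip := (hinner H).
Variables S A : H -> Prop.
Hypothesis CS : closed_subspace S.
Hypothesis CA : closed_subspace A.
Hypothesis DS : direct_sum_whole A (orth S).

Lemma orth_range_mixed_proj0 y : orth (range (mixed_proj S A 0)) y <-> orth S y.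
Proof.
  assert (E : forall x, mixed_proj S A 0 x = oproj S x) by (intro x; unfold mixed_proj; vec_eq).
  split.
  - intros Oy s Ss. rewrite <- (oproj_id S CS s Ss), <- E. apply Oy. eexists. reflexivity.
  - intros Oy v [x ->]. rewrite E. apply Oy, oproj_mem, CS.
Qed.

Variable lam : R.
Hypothesis Hlam : 0 < lam <= 1.

(* [B^perp] is the image of [A^perp] under [b |-> b - (1 - lam) P_S b] *)
Definition shrink_S (c : R) (b : H) : H := hsub b (hscal H (1 - c) (oproj S b)).

Lemma oproj_shrink_S c b : oproj S (shrink_S c b) = hscal H c (oproj S b).
Proof. unfold shrink_S. rewrite (oprojB S CS), (oprojZ S CS), (oproj_idem S CS). vec_eq. Qed.

Lemma shrink_S_orth_range b : orth A b -> orth (range (mixed_proj S A lam)) (shrink_S lam b).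
Proof.
  intros Ob v [x ->]. unfold shrink_S, mixed_proj. autorewrite with inner.
  rewrite (Ob _ (obproj_mem S A DS x)).
  rewrite (oproj_adjoint S CS b), (oproj_obproj S A CS DS x).
  rewrite (inner_oprojl S CS b (oproj S x)), (oproj_idem S CS), <- (inner_oprojr S CS b x).
  ring.
Qed.

Lemma shrink_S_inv c b : 0 < c -> shrink_S (/ c) (shrink_S c b) = b.
Proof.
  intro Hc. unfold shrink_S at 1. rewrite oproj_shrink_S. unfold shrink_S.
  apply inner_ext. intro z. autorewrite with inner. field. lra.
Qed.

Lemma orth_range_mixed_proj y : orth (range (mixed_proj S A lam)) y ->
  orth A (shrink_S (/ lam) y).
Proof.
  intros Oy a Ha.
  assert (E : ip y (mixed_proj S A lam a) = 0) by (apply Oy; eexists; reflexivity).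
  unfold mixed_proj in E. rewrite (obproj_id S A CA DS a Ha) in E.
  unfold shrink_S. autorewrite with inner in *. rewrite (oproj_adjoint S CS y a).
  apply Rmult_eq_reg_l with lam; [| lra].
  replace (lam * (ip y a - (1 - / lam) * ip y (oproj S a))) with
    (lam * ip y a + (1 - lam) * ip y (oproj S a)) by (field; lra).
  lra.
Qed.

Lemma shrink_S_orth_part c b :
  hsub (shrink_S c b) (oproj S (shrink_S c b)) = hsub b (oproj S b).
Proof. rewrite oproj_shrink_S. unfold shrink_S. vec_eq. Qed.

Lemma inner_shrink_S c b : ip (shrink_S c b) (shrink_S c b) =
  ip (hsub b (oproj S b)) (hsub b (oproj S b)) + c ^ 2 * ip (oproj S b) (oproj S b).
Proof.
  rewrite (pythagoras_oproj S CS (shrink_S c b)), shrink_S_orth_part, oproj_shrink_S.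
  rewrite hinnerZ, innerZr. ring.
Qed.

Lemma shrink_S_neq0 c b : 0 < c -> b <> hzero H -> shrink_S c b <> hzero H.
Proof.
  intros Hc Nb E. pose proof (inner_self_gt0 b Nb) as Pb.
  pose proof (inner_shrink_S c b) as Ey. rewrite E, inner0l in Ey.
  rewrite (pythagoras_oproj S CS b) in Pb.
  pose proof (hinner_pos H (hsub b (oproj S b))). pose proof (hinner_pos H (oproj S b)).
  assert (0 < c ^ 2) by (apply pow_lt; lra).
  assert (0 <= c ^ 2 * ip (oproj S b) (oproj S b)) by (apply Rmult_le_pos; lra).
  assert (ip (oproj S b) (oproj S b) = 0) by (apply (Rmult_eq_reg_l (c ^ 2)); lra). lra.
Qed.

Lemma sin_ratio_shrink_S c b : 0 < c -> b <> hzero H ->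
  sin_ratio S (shrink_S c b) ^ 2 = ratio_map (c ^ 2) (sin_ratio S b ^ 2).
Proof.
  intros Hc Nb. pose proof (shrink_S_neq0 c b Hc Nb) as Ny.
  pose proof (inner_self_gt0 b Nb) as Pb. rewrite (pythagoras_oproj S CS b) in Pb.
  rewrite !sin_ratio_sq, shrink_S_orth_part, inner_shrink_S, (pythagoras_oproj S CS b) by auto.
  rewrite (Rplus_comm (ip (oproj S b) (oproj S b))). apply ratio_map_components; try apply hinner_pos; try lra.
  apply pow_lt, Hc.
Qed.

Lemma sin_angle_orth_range_mixed_proj_pos : nonzero_sub (orth A) ->
  sin_angle (orth (range (mixed_proj S A lam))) S ^ 2 =
  ratio_map (lam ^ 2) (sin_angle (orth A) S ^ 2).
Proof.
  intro NoA. set (Bperp := orth (range (mixed_proj S A lam))).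
  assert (Hlam2 : 0 < lam ^ 2) by (apply pow_lt; lra).
  assert (Hilam : 0 < / lam) by (apply Rinv_0_lt_compat; lra).
  assert (NB : nonzero_sub Bperp).
  { destruct NoA as [b [Ob Nb]]. exists (shrink_S lam b).
    split; [apply shrink_S_orth_range, Ob | apply shrink_S_neq0; [lra | exact Nb]]. }
  assert (HB : sin_angle Bperp S ^ 2 <= ratio_map (lam ^ 2) (sin_angle (orth A) S ^ 2)).
  { apply (sin_angle_sq_le_ratio_map S CS); auto. intros y Oy Ny.
    exists (shrink_S (/ lam) y). pose proof (shrink_S_neq0 (/ lam) y Hilam Ny) as Nb.
    split; [apply orth_range_mixed_proj, Oy |]. split; [exact Nb |].
    rewrite <- (shrink_S_inv (/ lam) y Hilam) at 1. rewrite Rinv_inv.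
    apply sin_ratio_shrink_S; [lra | exact Nb]. }
  assert (HA : sin_angle (orth A) S ^ 2 <= ratio_map ((/ lam) ^ 2) (sin_angle Bperp S ^ 2)).
  { apply (sin_angle_sq_le_ratio_map S CS); auto; [apply pow_lt; lra |]. intros b Ob Nb.
    exists (shrink_S lam b). pose proof (shrink_S_neq0 lam b (proj1 Hlam) Nb) as Ny.
    split; [apply shrink_S_orth_range, Ob |]. split; [exact Ny |].
    rewrite <- (shrink_S_inv lam b (proj1 Hlam)) at 1.
    apply sin_ratio_shrink_S; auto. }
  pose proof (sin_angle_bounds S CS _ NB) as [sB0 sB1].
  pose proof (sin_angle_bounds S CS _ NoA) as [sA0 sA1].
  apply Rle_antisym; [exact HB |].
  (* apply the increasing map [ratio_map (lam^2)], inverse to [ratio_map ((/lam)^2)], to [HA] *)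
  rewrite <- (ratio_map_inv ((/ lam) ^ 2) (sin_angle Bperp S ^ 2)) by (try apply pow_lt; nra).
  replace (/ (/ lam) ^ 2) with (lam ^ 2) by (field; lra).
  apply ratio_map_le; [exact Hlam2 | nra | exact HA |].
  apply ratio_map_bounds; [apply pow_lt; lra | nra].
Qed.

End MixedProjection.

Lemma sin_angle_orth_range_mixed_proj {H : RHilbert} (S A : H -> Prop) lam :
  closed_subspace S -> closed_subspace A -> direct_sum_whole A (orth S) ->
  nonzero_sub (orth S) -> nonzero_sub (orth A) -> 0 < sin_angle (orth A) S -> 0 <= lam <= 1 ->
  sin_angle (orth (range (mixed_proj S A lam))) S ^ 2 =
  ratio_map (lam ^ 2) (sin_angle (orth A) S ^ 2).
Proof.
  intros CS CA DS NoS NoA Hs Hlam. destruct (Req_dec lam 0) as [-> | Hlam0].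
  - rewrite (sin_angle_ext S CS (orth S)), sin_angle_orth_self by
      (auto; intro y; symmetry; apply orth_range_mixed_proj0; auto).
    unfold ratio_map. field. nra.
  - apply sin_angle_orth_range_mixed_proj_pos; auto; lra.
Qed.

Lemma angle_formula_bounds lam sA cA sg kp :
  sA ^ 2 + cA ^ 2 = 1 -> sg ^ 2 + kp ^ 2 = 1 -> cA ^ 2 + kp ^ 2 <= 1 -> 0 < cA -> 0 < sg ->
  1 / (1 + lam ^ 2 * (sA ^ 2 / cA ^ 2)) <= ratio_map (lam ^ 2) (sg ^ 2) <=
  1 / (1 + lam ^ 2 * (kp ^ 2 / sg ^ 2)).
Proof.
  intros SCA SCo Hsum HcA Hs. unfold ratio_map.
  replace (1 - sg ^ 2) with (kp ^ 2) by lra.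
  assert (0 < sg ^ 2) by nra. assert (0 < cA ^ 2) by nra. assert (0 <= lam ^ 2) by nra.
  split.
  - replace (1 / (1 + lam ^ 2 * (sA ^ 2 / cA ^ 2))) with (cA ^ 2 / (cA ^ 2 + lam ^ 2 * sA ^ 2))
      by (field; nra).
    apply Rdiv_le_Rdiv; [nra | nra |].
    (* [kp^2 <= sA^2] and [cA^2 <= sg^2] *)
    assert (0 <= lam ^ 2 * (sA ^ 2 * sg ^ 2 - cA ^ 2 * kp ^ 2)) by (apply Rmult_le_pos; nra).
    nra.
  - right. field. nra.
Qed.

Theorem mainTheorem7 (H : RHilbert) (S A : H -> Prop) (lam : R) :
  closed_subspace S -> closed_subspace A ->
  nonzero_sub S -> nonzero_sub A -> nonzero_sub (orth S) -> nonzero_sub (orth A) ->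
  direct_sum_whole A (orth S) ->
  0 < sin_angle (orth A) S ->
  0 <= lam <= 1 ->
  let B := fun x : H => hadd H (hscal H lam (obproj A (orth S) x))
                                (hscal H (1 - lam) (oproj S x)) in
  let BB := range B in
  1 / (1 + lam ^ 2 * (sin_angle A S ^ 2 / cos_angle A S ^ 2))
    <= sin_angle (orth BB) S ^ 2 <=
  1 / (1 + lam ^ 2 * (cos_angle (orth A) S ^ 2 / sin_angle (orth A) S ^ 2)).
Proof.
  intros CS CA _ NA NoS NoA DS Hs Hlam B BB.
  change BB with (range (mixed_proj S A lam)).
  rewrite (sin_angle_orth_range_mixed_proj S A lam) by assumption.
  apply angle_formula_bounds.
  - apply (sin_angle_sq_add_cos_angle_sq S CS A NA).
  - apply (sin_angle_sq_add_cos_angle_sq S CS (orth A) NoA).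
  - apply (cos_angle_sq_add_le S CS A DS NA NoA).
  - apply (cos_angle_gt0 S A CS CA DS NA).
  - exact Hs.
Qed.
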